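(* For $\tau\in\mathcal{L}$, the space $(\mathbb{R},\tau)$ is of first category if and only if every nonempty $\tau$-open set is an unbounded subset of $\mathbb{R}$.
   Context: $\eta$ denotes the Euclidean topology on $\mathbb{R}$. $\mathcal{L}$ denotes the family of all Hausdorff topologies $\tau$ on $\mathbb{R}$ with $\tau\subset\eta$. *)

(* The real line is an arbitrary R : realType
   (a complete archimedean ordered field, i.e. a model of the reals);
   the Euclidean topology eta is MathComp-Analysis's [open] on R. *)
From HB Require Import structures.
From mathcomp Require Import all_boot all_order all_algebra.
From mathcomp Require Import all_classical all_reals all_analysis.
Set Implicit Arguments. Unset Strict Implicit. Unset Printing Implicit Defensive.
Import Order.TTheory GRing.Theory Num.Theory.
Import numFieldNormedType.Exports.
Local Open Scope classical_set_scope.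
Local Open Scope ring_scope.

Section TopOnR.
Variable R : realType.

Definition is_topology (tau : set (set R)) : Prop :=
  [/\ tau setT, tau set0,
      (forall F : set (set R), F `<=` tau -> tau (\bigcup_(A in F) A))
    & (forall A B, tau A -> tau B -> tau (A `&` B))].

Definition hausdorff_fam (tau : set (set R)) : Prop :=
  forall x y : R, x <> y ->
    exists U V, [/\ tau U, tau V, U x, V y & U `&` V = set0].

Definition coarser_than_euclid (tau : set (set R)) : Prop :=
  forall U, tau U -> open U.

Definition in_L (tau : set (set R)) : Prop :=
  [/\ is_topology tau, hausdorff_fam tau & coarser_than_euclid tau].

Definition tclosure (tau : set (set R)) (A : set R) : set R :=
  [set x | forall U, tau U -> U x -> U `&` A !=set0].

Definition tinterior (tau : set (set R)) (A : set R) : set R :=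
  [set x | exists U, [/\ tau U, U x & U `<=` A]].

Definition tnowhere_dense (tau : set (set R)) (A : set R) : Prop :=
  tinterior tau (tclosure tau A) = set0.

Definition first_category (tau : set (set R)) : Prop :=
  exists F : nat -> set R,
    (forall n, tnowhere_dense tau (F n)) /\ \bigcup_n F n = setT.

Definition Rbounded (A : set R) : Prop :=
  exists M : R, forall x, A x -> `|x| <= M.

End TopOnR.

From HB Require Import structures.
From mathcomp Require Import all_boot all_order all_algebra.
From mathcomp Require Import all_classical all_reals all_analysis.
Set Implicit Arguments. Unset Strict Implicit.
Import Order.TTheory GRing.Theory Num.Theory.
Import numFieldNormedType.Exports.
Local Open Scope classical_set_scope.
Local Open Scope ring_scope.

(* If (R, tau) is of first category, Baire's theorem for the Euclidean line
   gives a nonempty Euclidean open set W inside a bounded tau-open set U and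
   inside the (Euclidean closed) tau-closure of some F n.  Since tau is
   Hausdorff and coarser than eta, Euclidean compact sets are tau-closed, so
   W = U minus the compact set {|x| <= M} \ W is tau-open, contradicting that
   F n is tau-nowhere dense.  Conversely, if nonempty tau-open sets are
   unbounded, the compact (hence tau-closed) intervals [-n, n] are
   tau-nowhere dense and cover R. *)

Lemma Baire_closed_cover {K : realType} {V : completeNormedModType K}
    {U : set V} {C : (set V)^nat} :
  open U -> U !=set0 -> (forall n, closed (C n)) -> U `<=` \bigcup_n C n ->
  exists n W, [/\ open W, W !=set0 & W `<=` U `&` C n].
Proof.
move=> oU [u Uu] cC UC; apply: contrapT => noW.
pose O n := ~` C n `|` ~` closure U.
have odO n : open (O n) /\ dense (O n).
  split; first by apply: openU; apply: closed_openC => //; exact: closed_closure.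
  move=> Z [p Zp] oZ.
  have [[v [Zv Uv]]|ZU0] := pselect (Z `&` U !=set0).
    have /existsNP[z /not_implyP[[Zz Uz] nCz]] : ~ (Z `&` U `<=` U `&` C n).
      move=> ZUC; apply: noW; exists n, (Z `&` U); split => //; last by exists v.
      exact: openI.
    by exists z; split => //; left => Cz; apply: nCz.
  exists p; split => //; right => /(_ Z (open_nbhs_nbhs (conj oZ Zp))).
  by move=> [y [Uy Zy]]; apply: ZU0; exists y.
have [x [Ux Ox]] := Baire odO (ex_intro _ u Uu) oU.
have [i _ Cix] := UC x Ux.
by case: (Ox i I); apply => //; exact: subset_closure.
Qed.

Lemma norm_le_compact (R : realType) (M : R) : compact [set x : R | `|x| <= M].
Proof.
have -> : [set x : R | `|x| <= M] = `[-M, M]%classic.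
  by apply/seteqP; split => x /=; rewrite in_itv /= ler_norml.
exact: segment_compact.
Qed.

Section TauTopology.
Variables (R : realType) (tau : set (set R)).
Hypothesis tau_top : is_topology tau.

Lemma subset_tclosure (A : set R) : A `<=` tclosure tau A.
Proof. by move=> x Ax V _ Vx; exists x. Qed.

Lemma tclosure_id (A : set R) : tau (~` A) -> tclosure tau A = A.
Proof.
move=> tAC; apply/seteqP; split; last exact: subset_tclosure.
move=> x clx; apply: contrapT => nAx.
by have [y [nAy Ay]] := clx _ tAC nAx.
Qed.

Lemma tau_tclosureC (A : set R) : tau (~` tclosure tau A).
Proof.
have [_ _ tau_bigcup _] := tau_top.
have -> : ~` tclosure tau A =
    \bigcup_(V in [set V | tau V /\ V `&` A = set0]) V.
  apply/seteqP; split => [x nclx|x [V [tV VA0] Vx] clx].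
    have /existsNP[V /not_implyP[tV /not_implyP[Vx /set0P/negP/negbNE/eqP]]]
      := nclx.
    by exists V.
  by have := clx V tV Vx; rewrite VA0 => -[].
by apply: tau_bigcup => V [].
Qed.

(* R with tau as its topology; the argument keeps the instance specific to tau. *)
Definition tau_space (_ : is_topology tau) : Type := R.
Local Notation T := (tau_space tau_top).
HB.instance Definition _ := Choice.on T.

Let tau_setT : tau (setT : set T). Proof. by have [] := tau_top. Qed.

Let tau_setI : setI_closed (tau : set (set T)).
Proof. by have [_ _ _ tauI] := tau_top => A B; exact: tauI. Qed.

Let tau_bigcup (I : Type) (f : I -> set T) :
  (forall i, tau (f i)) -> tau (\bigcup_i f i).
Proof.
move=> tf; have [_ _ tauU _] := tau_top.
have <- : \bigcup_(A in range f) A = \bigcup_i f i by exact: bigcup_image.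
by apply: tauU => _ [i _ <-].
Qed.

HB.instance Definition _ := isOpenTopological.Build T tau_setT tau_setI tau_bigcup.

Hypotheses (tau_hausdorff : hausdorff_fam tau)
           (tau_coarser : coarser_than_euclid tau).

Lemma compact_tau_closedC (A : set R) : compact A -> tau (~` A).
Proof.
move=> cA.
have id_cont : continuous (id : R -> T).
  by apply/continuousP => B; exact: tau_coarser.
have cAT : compact (A : set T).
  by rewrite -[A]image_id; apply: continuous_compact => //;
     exact: continuous_subspaceT.
have hT : hausdorff_space T.
  rewrite open_hausdorff => x y /eqP xy.
  have [U [V [tU tV Ux Vy UV0]]] := tau_hausdorff xy.
  by exists (U, V); [split; rewrite inE | split => //; rewrite UV0].
by have := compact_closed hT cAT; rewrite -openC.
Qed.

Lemma tau_open_subset_bounded (U W : set R) :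
  tau U -> Rbounded U -> open W -> W `<=` U -> tau W.
Proof.
move=> tU [M UM] oW WU; have [_ _ _ tauI] := tau_top.
have -> : W = U `&` ~` ([set x | `|x| <= M] `&` ~` W).
  apply/seteqP; split => [x Wx|x [Ux nKx]].
    by split; [exact: WU | move=> [_]; apply].
  by apply: contrapT => nWx; apply: nKx; split => //; exact: UM.
apply: tauI => //; apply: compact_tau_closedC.
by apply: compact_closedI; [exact: norm_le_compact | exact: open_closedC].
Qed.

End TauTopology.

Theorem proposition2 (R : realType) (tau : set (set R)) :
  in_L tau ->
  (first_category tau <->
   (forall U : set R, tau U -> U !=set0 -> ~ Rbounded U)).
Proof.
move=> [top haus coarse]; split.
  move=> [F [Fnd Fcov]] U tU U0 Ubd.
  have closed_tclosure n : closed (tclosure tau (F n)).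
    by rewrite -openC; apply: coarse; exact: tau_tclosureC.
  have cover : U `<=` \bigcup_n tclosure tau (F n).
    move=> x _; have [n _ Fnx] : (\bigcup_n F n) x by rewrite Fcov.
    by exists n => //; exact: subset_tclosure.
  have [n [W [oW [w Ww] WUC]]] :=
    Baire_closed_cover (coarse U tU) U0 closed_tclosure cover.
  have tW : tau W.
    by apply: (tau_open_subset_bounded top haus coarse tU) => // x /WUC[].
  have /seteqP[/(_ w) + _] := Fnd n; apply.
  by exists W; split => // x /WUC[].
move=> unbounded; exists (fun n : nat => [set x : R | `|x| <= n%:R]); split.
  move=> n; rewrite /tnowhere_dense tclosure_id; last first.
    by apply: (compact_tau_closedC top haus coarse); exact: norm_le_compact.
  apply/seteqP; split => // x [V [tV Vx VK]].
  by apply: (unbounded V tV); [exists x | exists n%:R].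
apply/seteqP; split => // x _; exists (Num.Def.archi_bound `|x|) => //=.
exact/ltW/archi_boundP.
Qed.
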